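(* Let $\phi$ be the standard normal density, $\gamma(x)=\frac{1}{\pi(1+x^2)}$ the standard Cauchy density, $g=\phi*\gamma$, and for $\alpha\in(0,1)$ let $t(\alpha)>0$ be the posterior median threshold defined in the context. For $A\ge0$ and $n\ge 2$ let $t_A=\sqrt{2(1+A)\log n}$ and $\alpha_A=t^{-1}(t_A)$. Then there exist $N_0>0$ and $C>0$, both independent of $A$, such that for all $n\ge N_0$, \[ \alpha_A\le C(1+A)(\log n)\,n^{-1-A}. \]
   Context: For $\alpha\in[0,1]$, consider the single-coordinate posterior $(1-a(x))\delta_0+a(x)\gamma_x(u)\,du$ of $\theta$ given $x\sim\mathcal{N}(\theta,1)$ under the prior $(1-\alpha)\delta_0+\alpha\gamma(u)\,du$, where $a(x)=\frac{\alpha g(x)}{(1-\alpha)\phi(x)+\alpha g(x)}$ and $\gamma_x(u)=\phi(x-u)\gamma(u)/g(x)$. Its median is $0$ if and only if $|x|\le t(\alpha)$, which defines $t(\alpha)$; the map $\alpha\mapsto t(\alpha)$ is continuous and strictly decreasing, so $t^{-1}$ exists. *)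

From Stdlib Require Import Reals.
From Coquelicot Require Import Coquelicot.
Open Scope R_scope.

Definition phi (x : R) : R := exp (- x ^ 2 / 2) / sqrt (2 * PI).

Definition cauchy (x : R) : R := 1 / (PI * (1 + x ^ 2)).

Definition g (x : R) : R :=
  RInt_gen (fun u => phi (x - u) * cauchy u)
    (Rbar_locally m_infty) (Rbar_locally p_infty).

Definition post_a (alpha x : R) : R :=
  alpha * g x / ((1 - alpha) * phi x + alpha * g x).

Definition gamma_x (x u : R) : R := phi (x - u) * cauchy u / g x.

Definition post_neg (alpha x : R) : R :=
  post_a alpha x * RInt_gen (gamma_x x) (Rbar_locally m_infty) (at_point 0).
Definition post_pos (alpha x : R) : R :=
  post_a alpha x * RInt_gen (gamma_x x) (at_point 0) (Rbar_locally p_infty).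

(* the posterior median is 0 (the posterior cdf jumps across 1/2 at 0) *)
Definition post_median_zero (alpha x : R) : Prop :=
  post_neg alpha x <= 1 / 2 /\ post_pos alpha x <= 1 / 2.

Definition tA (A : R) (n : nat) : R := sqrt (2 * (1 + A) * ln (INR n)).

(* At x = t_A the posterior median is 0, so P(theta > 0 | x) =
   alpha P / ((1 - alpha) phi(x) + alpha (N + P)) <= 1/2, where N and P are the
   integrals of phi(x - u) gamma(u) over u < 0 and u > 0.  For u <= 0 <= x we have
   phi(x - u) <= phi(x), so N <= phi(x) and hence alpha P <= phi(x).  Bounding the
   integrand below on [x, x + 1] gives P >= phi(1) gamma(x + 1), whence
   alpha <= phi(x) / (phi(1) gamma(x + 1)) = sqrt(e) pi (1 + (x + 1)^2) exp(-x^2/2);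
   with x^2 = 2 (1 + A) log n this is O((1 + A) log n * n^(-1-A)). *)

From Pilot Require Import Defs.
From Stdlib Require Import Reals Lra Classical.
From Coquelicot Require Import Coquelicot.
Open Scope R_scope.

Lemma exp_le_exp_of_le x y : x <= y -> exp x <= exp y.
Proof.
  intros [Hlt | ->]; [now left; apply exp_increasing | apply Rle_refl].
Qed.

Lemma sqrt_2PI_pos : 0 < sqrt (2 * PI).
Proof. apply sqrt_lt_R0; pose proof PI_RGT_0; lra. Qed.

Lemma phi_pos x : 0 < phi x.
Proof. apply Rdiv_lt_0_compat; [apply exp_pos | apply sqrt_2PI_pos]. Qed.

Lemma cauchy_pos x : 0 < Defs.cauchy x.
Proof. pose proof PI_RGT_0; apply Rdiv_lt_0_compat; nra. Qed.

Lemma phi_le_abs x y : Rabs x <= Rabs y -> phi y <= phi x.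
Proof.
  intros Hxy; unfold phi, Rdiv.
  apply Rmult_le_compat_r; [left; apply Rinv_0_lt_compat, sqrt_2PI_pos |].
  apply exp_le_exp_of_le.
  rewrite <- (pow2_abs x), <- (pow2_abs y); pose proof (Rabs_pos x); nra.
Qed.

Lemma cauchy_le_abs x y : Rabs x <= Rabs y -> Defs.cauchy y <= Defs.cauchy x.
Proof.
  intros Hxy; unfold Defs.cauchy; pose proof PI_RGT_0.
  rewrite <- (pow2_abs x), <- (pow2_abs y); pose proof (Rabs_pos x).
  unfold Rdiv; rewrite !Rmult_1_l.
  assert (Hsq : Rabs x ^ 2 <= Rabs y ^ 2) by nra.
  apply Rinv_le_contravar.
  - apply Rmult_lt_0_compat; nra.
  - apply Rmult_le_compat_l; lra.
Qed.

Lemma is_RInt_cauchy a b : is_RInt Defs.cauchy a b ((atan b - atan a) / PI).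
Proof.
  pose proof PI_RGT_0.
  replace ((atan b - atan a) / PI) with (minus (atan b / PI) (atan a / PI))
    by (unfold minus, plus, opp; simpl; field; lra).
  apply (is_RInt_derive (fun x => atan x / PI)).
  - intros x _.
    apply (is_derive_ext (fun x => scal (/ PI) (atan x)));
      [intro; unfold scal; simpl; unfold mult; simpl; field; lra |].
    replace (Defs.cauchy x) with (scal (/ PI) (/ (1 + x ^ 2))).
    + apply is_derive_scal, is_derive_Reals, derivable_pt_lim_atan.
    + unfold Defs.cauchy, scal; simpl; unfold mult; simpl; field; split; nra.
  - intros x _; apply (@ex_derive_continuous R_AbsRing R_NormedModule).
    unfold Defs.cauchy; auto_derive; nra.
Qed.

Lemma ex_RInt_cauchy a b : ex_RInt Defs.cauchy a b.
Proof. eexists; apply is_RInt_cauchy. Qed.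

Lemma RInt_scal_cauchy_le k a b :
  0 <= k -> a <= b -> RInt (fun u => k * Defs.cauchy u) a b <= k.
Proof.
  intros Hk Hab; pose proof PI_RGT_0.
  rewrite (is_RInt_unique _ a b (k * ((atan b - atan a) / PI)));
    [| apply (is_RInt_scal Defs.cauchy), is_RInt_cauchy].
  pose proof (atan_bound a); pose proof (atan_bound b).
  rewrite <- (Rmult_1_r k) at 2; apply Rmult_le_compat_l; [lra |].
  apply (Rmult_le_reg_r PI); [lra |].
  unfold Rdiv; rewrite Rmult_assoc, Rinv_l; lra.
Qed.

Lemma nondecreasing_bounded_cvg (F : R -> R) (a M : R) :
  (forall x y, a <= x <= y -> F x <= F y) -> (forall x, a <= x -> F x <= M) ->
  exists L, filterlim F (Rbar_locally p_infty) (locally L) /\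
    (forall x, a <= x -> F x <= L) /\ L <= M.
Proof.
  intros Hmono Hbound.
  set (E := fun y => exists x, a <= x /\ y = F x).
  assert (HE : bound E) by (exists M; intros y [x [Hx ->]]; auto).
  assert (Ha : E (F a)) by (exists a; split; [lra | auto]).
  destruct (completeness E HE (ex_intro _ _ Ha)) as [L [HLub HLleast]].
  exists L; split; [| split].
  - apply filterlim_locally; intros eps.
    assert (Hnear : exists x0, a <= x0 /\ L - eps < F x0).
    { apply NNPP; intros Hnone.
      assert (L <= L - eps); [| destruct eps; simpl in *; lra].
      apply HLleast; intros y [x [Hx ->]].
      apply Rnot_lt_le; intros Hlt; apply Hnone; eauto. }
    destruct Hnear as [x0 [Hx0 Hlt]].
    exists (Rmax a x0); intros x Hx.
    assert (F x0 <= F x) by (apply Hmono; pose proof (Rmax_r a x0); lra).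
    assert (F x <= L) by (apply HLub; exists x; pose proof (Rmax_l a x0); split; [lra | auto]).
    apply Rabs_def1; simpl; unfold minus, plus, opp; simpl; lra.
  - intros x Hx; apply HLub; exists x; auto.
  - apply HLleast; intros y [x [Hx ->]]; auto.
Qed.

Section NonnegativeImproperIntegral.

Variable f : R -> R.
Hypothesis f_int : forall a b, ex_RInt f a b.
Hypothesis f_ge0 : forall x, 0 <= f x.

Lemma is_RInt_gen_at_point_p_infty_nonneg (a M : R) :
  (forall b, a <= b -> RInt f a b <= M) ->
  exists L, is_RInt_gen f (at_point a) (Rbar_locally p_infty) L /\
    (forall b, a <= b -> RInt f a b <= L) /\ L <= M.
Proof.
  intros Hbound.
  destruct (nondecreasing_bounded_cvg (fun b => RInt f a b) a M) as [L [Hlim HL]];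
    auto.
  { intros x y Hxy; rewrite <- (RInt_Chasles f a x y) by auto.
    assert (0 <= RInt f x y) by (apply RInt_ge_0; auto; lra).
    unfold plus; simpl; lra. }
  exists L; split; auto.
  apply filterlimi_lim_ext with (f := fun ab => RInt f (fst ab) (snd ab));
    [intros ab; apply (RInt_correct (V := R_CompleteNormedModule)); auto |].
  apply filterlim_locally; intros eps.
  destruct (proj1 (filterlim_locally _ L) Hlim eps) as [M' HM'].
  apply Filter_prod with (fun x => x = a) (fun b => M' < b);
    [reflexivity | now exists M' |].
  intros x b -> Hb; apply HM'; auto.
Qed.

Lemma is_RInt_gen_m_infty_at_point_nonneg (a M : R) :
  (forall b, b <= a -> RInt f b a <= M) ->
  exists L, is_RInt_gen f (Rbar_locally m_infty) (at_point a) L /\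
    (forall b, b <= a -> RInt f b a <= L) /\ L <= M.
Proof.
  intros Hbound.
  destruct (nondecreasing_bounded_cvg (fun x => RInt f (- x) a) (- a) M)
    as [L [Hlim [HL HLM]]].
  { intros x y Hxy; rewrite <- (RInt_Chasles f (- y) (- x) a) by auto.
    assert (0 <= RInt f (- y) (- x)) by (apply RInt_ge_0; auto; lra).
    unfold plus; simpl; lra. }
  { intros x Hx; apply Hbound; lra. }
  exists L; split; [| split; auto].
  - apply filterlimi_lim_ext with (f := fun ab => RInt f (fst ab) (snd ab));
      [intros ab; apply (RInt_correct (V := R_CompleteNormedModule)); auto |].
    apply filterlim_locally; intros eps.
    destruct (proj1 (filterlim_locally _ L) Hlim eps) as [M' HM'].
    apply Filter_prod with (fun x => x < - M') (fun b => b = a);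
      [now exists (- M') | reflexivity |].
    intros x b Hx ->; simpl; rewrite <- (Ropp_involutive x); apply HM'; lra.
  - intros b Hb; rewrite <- (Ropp_involutive b); apply HL; lra.
Qed.

End NonnegativeImproperIntegral.

Definition conv_integrand (x u : R) : R := phi (x - u) * Defs.cauchy u.

Lemma conv_integrand_ge0 x u : 0 <= conv_integrand x u.
Proof. left; apply Rmult_lt_0_compat; [apply phi_pos | apply cauchy_pos]. Qed.

Lemma ex_RInt_conv_integrand x a b : ex_RInt (conv_integrand x) a b.
Proof.
  apply (@ex_RInt_continuous R_CompleteNormedModule); intros u _.
  apply (@ex_derive_continuous R_AbsRing R_NormedModule).
  unfold conv_integrand, phi, Defs.cauchy; auto_derive.
  pose proof PI_RGT_0; nra.
Qed.

Lemma RInt_conv_integrand_le x a b k :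
  a <= b -> 0 <= k -> (forall u, a < u < b -> phi (x - u) <= k) ->
  RInt (conv_integrand x) a b <= k.
Proof.
  intros Hab Hk Hphi; eapply Rle_trans; [| apply (RInt_scal_cauchy_le k a b); auto].
  apply RInt_le; auto using ex_RInt_conv_integrand.
  - apply (ex_RInt_scal Defs.cauchy), ex_RInt_cauchy.
  - intros u Hu; apply Rmult_le_compat_r; [left; apply cauchy_pos | auto].
Qed.

Lemma conv_left_tail x : 0 <= x ->
  exists N, is_RInt_gen (conv_integrand x) (Rbar_locally m_infty) (at_point 0) N /\
    0 <= N <= phi x.
Proof.
  intros Hx.
  destruct (is_RInt_gen_m_infty_at_point_nonneg (conv_integrand x)
              (ex_RInt_conv_integrand x) (conv_integrand_ge0 x) 0 (phi x))
    as [N [HN [HlowN HNup]]].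
  { intros b Hb; apply RInt_conv_integrand_le; auto; [left; apply phi_pos |].
    intros u Hu; apply phi_le_abs; rewrite !Rabs_pos_eq; lra. }
  exists N; repeat split; auto.
  apply Rle_trans with (RInt (conv_integrand x) 0 0); [| apply HlowN, Rle_refl].
  right; symmetry; exact (@RInt_point R_CompleteNormedModule 0 _).
Qed.

Lemma conv_right_tail x : 0 <= x ->
  exists P, is_RInt_gen (conv_integrand x) (at_point 0) (Rbar_locally p_infty) P /\
    phi 1 * Defs.cauchy (x + 1) <= P.
Proof.
  intros Hx.
  destruct (is_RInt_gen_at_point_p_infty_nonneg (conv_integrand x)
              (ex_RInt_conv_integrand x) (conv_integrand_ge0 x) 0 (phi 0))
    as [P [HP [HlowP _]]].
  { intros b Hb; apply RInt_conv_integrand_le; auto; [left; apply phi_pos |].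
    intros u _; apply phi_le_abs; rewrite Rabs_R0; apply Rabs_pos. }
  exists P; split; auto.
  apply Rle_trans with (RInt (conv_integrand x) x (x + 1)).
  - replace (phi 1 * Defs.cauchy (x + 1)) with (RInt (fun _ => phi 1 * Defs.cauchy (x + 1)) x (x + 1))
      by (rewrite RInt_const; unfold scal; simpl; unfold mult; simpl; ring).
    apply RInt_le; auto using ex_RInt_const, ex_RInt_conv_integrand; [lra |].
    intros u Hu; apply Rmult_le_compat; try (left; apply phi_pos); try (left; apply cauchy_pos).
    + apply phi_le_abs; rewrite Rabs_R1; apply Rabs_le; lra.
    + apply cauchy_le_abs; rewrite !Rabs_pos_eq; lra.
  - apply Rle_trans with (RInt (conv_integrand x) 0 (x + 1)); [| apply HlowP; lra].
    rewrite <- (RInt_Chasles _ 0 x (x + 1)) by apply ex_RInt_conv_integrand.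
    assert (0 <= RInt (conv_integrand x) 0 x)
      by (apply RInt_ge_0; auto using ex_RInt_conv_integrand, conv_integrand_ge0).
    unfold plus; simpl; lra.
Qed.

Lemma post_pos_split alpha x N P :
  is_RInt_gen (conv_integrand x) (Rbar_locally m_infty) (at_point 0) N ->
  is_RInt_gen (conv_integrand x) (at_point 0) (Rbar_locally p_infty) P ->
  N + P <> 0 ->
  post_pos alpha x = alpha * P / ((1 - alpha) * phi x + alpha * (N + P)).
Proof.
  intros HN HP HNP.
  assert (Hg : g x = N + P).
  { apply is_RInt_gen_unique; exact (is_RInt_gen_Chasles _ 0 N P HN HP). }
  assert (Hslab : RInt_gen (gamma_x x) (at_point 0) (Rbar_locally p_infty) = P / g x).
  { apply is_RInt_gen_unique.
    replace (P / g x) with (scal (/ g x) P)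
      by (unfold scal; simpl; unfold mult; simpl; unfold Rdiv; ring).
    apply (is_RInt_gen_ext (fun u => scal (/ g x) (conv_integrand x u)));
      [| exact (is_RInt_gen_scal _ (/ g x) P HP)].
    apply filter_forall; intros ab u _.
    unfold gamma_x, scal; simpl; unfold mult; simpl. fold (conv_integrand x u).
    unfold Rdiv; ring. }
  unfold post_pos, post_a; rewrite Hslab, Hg.
  unfold Rdiv; rewrite <- (Rmult_1_r (alpha * P)), <- (Rinv_r (N + P)) by exact HNP.
  ring.
Qed.

Lemma slab_weight_le_of_post_pos_le_half alpha x :
  0 <= x -> 0 < alpha < 1 -> post_pos alpha x <= 1 / 2 ->
  alpha * (phi 1 * Defs.cauchy (x + 1)) <= phi x.
Proof.
  intros Hx Halpha Hpos.
  destruct (conv_left_tail x Hx) as [N [HN [HN0 HNphi]]].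
  destruct (conv_right_tail x Hx) as [P [HP HcP]].
  pose proof (Rmult_lt_0_compat _ _ (phi_pos 1) (cauchy_pos (x + 1))).
  pose proof (phi_pos x).
  rewrite (post_pos_split alpha x N P HN HP) in Hpos by lra.
  set (D := (1 - alpha) * phi x + alpha * (N + P)) in Hpos.
  assert (HD : 0 < D) by (unfold D; nra).
  assert (Hhalf : alpha * P <= D / 2).
  { apply (Rmult_le_compat_r D) in Hpos; [| lra].
    unfold Rdiv in Hpos; rewrite Rmult_assoc, Rinv_l in Hpos; lra. }
  unfold D in Hhalf; nra.
Qed.

Lemma phi_eq_tail_ratio x :
  phi x = exp (1 / 2) * PI * (1 + (x + 1) ^ 2) * exp (- x ^ 2 / 2) *
          (phi 1 * Defs.cauchy (x + 1)).
Proof.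
  assert (Hexp : exp (1 / 2) * exp (- 1 ^ 2 / 2) = 1)
    by (rewrite <- exp_plus; replace (1 / 2 + - 1 ^ 2 / 2) with 0 by field;
        apply exp_0).
  pose proof sqrt_2PI_pos; pose proof PI_RGT_0.
  assert (0 < 1 + (x + 1) ^ 2) by nra.
  unfold phi, Defs.cauchy.
  transitivity (exp (- x ^ 2 / 2) / sqrt (2 * PI) * (exp (1 / 2) * exp (- 1 ^ 2 / 2)));
    [rewrite Hexp; ring | field; lra].
Qed.

Lemma exp_half_mul_PI_le_8 : exp (1 / 2) * PI <= 8.
Proof.
  assert (Hsq : exp (1 / 2) * exp (1 / 2) <= 3)
    by (rewrite <- exp_plus; replace (1 / 2 + 1 / 2) with 1 by field; apply exp_le_3).
  pose proof (exp_pos (1 / 2)); pose proof PI_4.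
  assert (exp (1 / 2) <= 2) by nra.
  nra.
Qed.

Theorem lemma12 :
  exists N0 C : R, 0 < N0 /\ 0 < C /\
    forall (A : R) (n : nat) (alphaA : R),
      0 <= A -> (2 <= n)%nat -> N0 <= INR n ->
      0 < alphaA < 1 ->
      (* alphaA = t^{-1}(t_A), i.e. t(alphaA) = t_A *)
      (forall x : R, post_median_zero alphaA x <-> Rabs x <= tA A n) ->
      alphaA <= C * (1 + A) * ln (INR n) * Rpower (INR n) (- 1 - A).
Proof.
  exists (exp 1), 56; split; [apply exp_pos | split; [lra |]].
  intros A n alpha HA _ Hn Halpha Hmedian.
  set (l := ln (INR n)); set (t := tA A n).
  assert (Hl : 1 <= l) by (rewrite <- (ln_exp 1); apply ln_le; [apply exp_pos | exact Hn]).
  assert (Ht0 : 0 <= t) by apply sqrt_pos.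
  assert (Ht2 : t ^ 2 = 2 * (1 + A) * l)
    by (unfold t, tA; fold l; rewrite <- Rsqr_pow2, Rsqr_sqrt; [reflexivity | nra]).
  assert (Hpow : Rpower (INR n) (- 1 - A) = exp (- t ^ 2 / 2))
    by (unfold Rpower; f_equal; rewrite Ht2; fold l; field).
  assert (Hpos : post_pos alpha t <= 1 / 2)
    by (apply Hmedian; fold t; rewrite Rabs_pos_eq; lra).
  pose proof (slab_weight_le_of_post_pos_le_half alpha t Ht0 Halpha Hpos) as Hw.
  rewrite (phi_eq_tail_ratio t) in Hw.
  apply Rmult_le_reg_r in Hw;
    [| apply Rmult_lt_0_compat; [apply phi_pos | apply cauchy_pos]].
  assert (HQ : 1 + (t + 1) ^ 2 <= 7 * (1 + A) * l).
  { assert (1 <= (1 + A) * l) by nra.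
    pose proof (pow2_ge_0 (t - 1)); nra. }
  pose proof exp_half_mul_PI_le_8; pose proof (exp_pos (- t ^ 2 / 2)).
  pose proof (pow2_ge_0 (t + 1)).
  rewrite Hpow; fold l.
  apply (Rle_trans _ _ _ Hw).
  apply Rmult_le_compat_r; [lra |].
  apply Rle_trans with (8 * (1 + (t + 1) ^ 2)); [apply Rmult_le_compat_r|]; lra.
Qed.
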